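(* Let $G$ be the abelian group of sequences $(\alpha_i)_{i\in\mathbb N}\in\{-1,1\}^{\mathbb N}$ which are eventually equal to $1$ (coordinatewise multiplication). Let $G$ act on $c_0$ by $u(g)(\sum_ix_ie_i)=\sum_i\alpha_ix_ie_i$, on $\mathbb R$ trivially ($v(g)=\mathrm{Id}$), and on $c_0\oplus\mathbb R$ by $$\lambda(g)(x,y)=\Big(u(g)x+y\sum_{i:\alpha_i=-1}e_i,\;y\Big),\qquad g=(\alpha_i)_i.$$ Then $\lambda$ is a bounded representation, $0\to c_0\to c_0\oplus\mathbb R\to\mathbb R\to0$ is an exact sequence of $G$-spaces which splits as a sequence of Banach spaces but does not $G$-split. Consequently $\mathrm{Ext}(\mathbb R,c_0)=\{0\}$ while $\mathrm{Ext}_G(\mathbb R,c_0)\neq\{0\}$.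
   Context: $(e_i)$ is the unit vector basis of $c_0$. An exact sequence of $G$-spaces has $G$-equivariant bounded arrows. It $G$-splits if the quotient map admits a bounded linear $G$-equivariant right inverse (equivalently, the sequence is equivalent via a $G$-equivariant isomorphism to the direct sum with diagonal action). $\mathrm{Ext}(Y,X)$ is the set of equivalence classes of exact sequences $0\to X\to Z\to Y\to0$ of Banach spaces; $\mathrm{Ext}_G(Y,X)$ is the set of classes of exact sequences of $G$-spaces (with the given actions on $X$ and $Y$) under $G$-equivariant equivalence; $0$ denotes the class of split (resp. $G$-split) sequences. *)

From Stdlib Require Import Reals Lra.
Open Scope R_scope.

Definition c0 (x : nat -> R) : Prop := Un_cv x 0.

Definition sup_le (x : nat -> R) (M : R) : Prop := forall n, Rabs (x n) <= M.

(* An element g of G = {-1,1}^N eventually 1 is encoded as g : nat -> bool,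
   with [g i = true] meaning alpha_i = -1; it must be eventually [false]. *)
Definition inG (g : nat -> bool) : Prop :=
  exists N, forall n, (N <= n)%nat -> g n = false.

(* coordinatewise multiplication of +-1 sequences = xor of the encodings *)
Definition Gmul (g h : nat -> bool) : nat -> bool := fun n => xorb (g n) (h n).
Definition Gunit : nat -> bool := fun _ => false.

Definition sgn (b : bool) : R := if b then -1 else 1.

Definition u_act (g : nat -> bool) (x : nat -> R) : nat -> R :=
  fun n => sgn (g n) * x n.

Definition lam (g : nat -> bool) (z : (nat -> R) * R) : (nat -> R) * R :=
  (fun n => sgn (g n) * fst z n + (if g n then snd z else 0), snd z).

Definition incl (x : nat -> R) : (nat -> R) * R := (x, 0).
Definition quot (z : (nat -> R) * R) : R := snd z.

Definition pair_le (z : (nat -> R) * R) (M : R) : Prop :=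
  sup_le (fst z) M /\ Rabs (snd z) <= M.

Definition in_c0R (z : (nat -> R) * R) : Prop := c0 (fst z).

Definition peq (z w : (nat -> R) * R) : Prop :=
  (forall n, fst z n = fst w n) /\ snd z = snd w.

Definition linear_c0R (T : (nat -> R) * R -> (nat -> R) * R) : Prop :=
  forall a b z w, in_c0R z -> in_c0R w ->
    peq (T ((fun n => a * fst z n + b * fst w n), a * snd z + b * snd w))
        ((fun n => a * fst (T z) n + b * fst (T w) n), a * snd (T z) + b * snd (T w)).

Definition bounded_c0R (T : (nat -> R) * R -> (nat -> R) * R) (C : R) : Prop :=
  forall z M, in_c0R z -> pair_le z M -> pair_le (T z) (C * M).

Definition bdd_linear_from_R (s : R -> (nat -> R) * R) : Prop :=
  (forall y, in_c0R (s y)) /\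
  (forall a b y y', peq (s (a * y + b * y'))
       ((fun n => a * fst (s y) n + b * fst (s y') n), a * snd (s y) + b * snd (s y'))) /\
  (exists C, forall y, pair_le (s y) (C * Rabs y)).

Record BanachSpace := {
  bs_car :> Type;
  bs_zero : bs_car;
  bs_add : bs_car -> bs_car -> bs_car;
  bs_opp : bs_car -> bs_car;
  bs_scal : R -> bs_car -> bs_car;
  bs_norm : bs_car -> R;
  bs_addA : forall x y z, bs_add x (bs_add y z) = bs_add (bs_add x y) z;
  bs_addC : forall x y, bs_add x y = bs_add y x;
  bs_add0 : forall x, bs_add x bs_zero = x;
  bs_addN : forall x, bs_add x (bs_opp x) = bs_zero;
  bs_scalA : forall a b x, bs_scal a (bs_scal b x) = bs_scal (a * b) x;
  bs_scal1 : forall x, bs_scal 1 x = x;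
  bs_scalDr : forall a x y, bs_scal a (bs_add x y) = bs_add (bs_scal a x) (bs_scal a y);
  bs_scalDl : forall a b x, bs_scal (a + b) x = bs_add (bs_scal a x) (bs_scal b x);
  bs_norm_ge0 : forall x, 0 <= bs_norm x;
  bs_norm_eq0 : forall x, bs_norm x = 0 -> x = bs_zero;
  bs_normZ : forall a x, bs_norm (bs_scal a x) = Rabs a * bs_norm x;
  bs_normD : forall x y, bs_norm (bs_add x y) <= bs_norm x + bs_norm y;
  bs_complete : forall u : nat -> bs_car,
    (forall eps, 0 < eps -> exists N, forall m n, (N <= m)%nat -> (N <= n)%nat ->
        bs_norm (bs_add (u m) (bs_opp (u n))) < eps) ->
    exists l, forall eps, 0 < eps -> exists N, forall n, (N <= n)%nat ->
        bs_norm (bs_add (u n) (bs_opp l)) < eps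
}.

Definition Ext_R_c0_trivial : Prop :=
  forall (Z : BanachSpace) (j : (nat -> R) -> Z) (q : Z -> R),
    (forall a b x x', c0 x -> c0 x' ->
       j (fun n => a * x n + b * x' n) = bs_add Z (bs_scal Z a (j x)) (bs_scal Z b (j x'))) ->
    (exists C, forall x M, c0 x -> sup_le x M -> bs_norm Z (j x) <= C * M) ->
    (forall a b z z', q (bs_add Z (bs_scal Z a z) (bs_scal Z b z')) = a * q z + b * q z') ->
    (exists C, forall z, Rabs (q z) <= C * bs_norm Z z) ->
    (forall x x', c0 x -> c0 x' -> j x = j x' -> forall n, x n = x' n) ->
    (forall y, exists z, q z = y) ->
    (forall z, q z = 0 <-> exists x, c0 x /\ j x = z) ->
    exists s : R -> Z,
      (forall a b y y', s (a * y + b * y') = bs_add Z (bs_scal Z a (s y)) (bs_scal Z b (s y'))) /\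
      (exists C, forall y, bs_norm Z (s y) <= C * Rabs y) /\
      (forall y, q (s y) = y).

(* A bounded linear right inverse of [quot] is determined by the single vector
   s(1) = (x, 1).  If s is G-equivariant, applying the element of G that flips
   only coordinate n gives -x_n + 1 = x_n, so x = (1/2, 1/2, ...), which is not
   in c_0.  Without equivariance, y |-> (0, y) is a section, and in general any
   exact sequence ending in the one-dimensional space R splits by scaling a
   preimage of 1. *)
From Stdlib Require Import Reals Lra Lia.
Open Scope R_scope.

Lemma Rabs_sgn b : Rabs (sgn b) = 1.
Proof.
destruct b; simpl; [rewrite Rabs_left|apply Rabs_R1]; lra.
Qed.

Lemma sgn_xorb a b : sgn (xorb a b) = sgn a * sgn b.
Proof. destruct a, b; simpl; ring. Qed.

Lemma c0_zero : c0 (fun _ => 0).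
Proof.
intros eps Heps; exists 0%nat; intros n _.
unfold R_dist; rewrite Rminus_0_r, Rabs_R0; exact Heps.
Qed.

Lemma c0_const x c : c0 x -> (forall n, x n = c) -> c = 0.
Proof.
intros Hc Hx; destruct (Req_dec c 0) as [|Hne]; [assumption|exfalso].
destruct (Hc (Rabs c) (Rabs_pos_lt c Hne)) as [N HN]; specialize (HN N (le_n N)).
unfold R_dist in HN; rewrite Rminus_0_r, Hx in HN; lra.
Qed.

Lemma u_act_c0 g x : c0 x -> c0 (u_act g x).
Proof.
intros Hx eps Heps; destruct (Hx eps Heps) as [N HN]; exists N; intros n Hn.
specialize (HN n Hn); unfold R_dist, u_act in *; rewrite Rminus_0_r in *.
rewrite Rabs_mult, Rabs_sgn, Rmult_1_l; exact HN.
Qed.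

(* Only here is [inG g] needed: the added vector y * sum_{g i} e_i is in c_0
   because it has finite support. *)
Lemma lam_c0R g : inG g -> forall z, in_c0R z -> in_c0R (lam g z).
Proof.
intros [N0 Hg] z Hz eps Heps; destruct (u_act_c0 g _ Hz eps Heps) as [N HN].
exists (max N N0); intros n Hn; simpl.
specialize (HN n ltac:(lia)); unfold u_act in HN.
rewrite (Hg n ltac:(lia)), Rplus_0_r in *; exact HN.
Qed.

Lemma lam_linear g : linear_c0R (lam g).
Proof. intros a b z w _ _; split; simpl; [intro n; destruct (g n)|]; ring. Qed.

Lemma lam_bounded g : bounded_c0R (lam g) 2.
Proof.
intros [x y] M _ [Hx Hy]; simpl in *; pose proof (Rabs_pos y).
split; simpl; [intro n|].
- eapply Rle_trans; [apply Rabs_triang|].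
  rewrite Rabs_mult, Rabs_sgn; specialize (Hx n).
  destruct (g n); [|rewrite Rabs_R0]; lra.
- lra.
Qed.

Lemma lam_unit z : peq (lam Gunit z) z.
Proof. split; simpl; [intro n|]; ring. Qed.

Lemma lam_mul g h z : peq (lam (Gmul g h) z) (lam g (lam h z)).
Proof.
split; simpl; [intro n|reflexivity].
unfold Gmul; rewrite sgn_xorb; destruct (g n), (h n); simpl; ring.
Qed.

Lemma lam_incl g x : peq (lam g (incl x)) (incl (u_act g x)).
Proof. split; simpl; [intro n; unfold u_act; destruct (g n)|]; ring. Qed.

Lemma quot_lam g z : quot (lam g z) = quot z.
Proof. reflexivity. Qed.

Lemma quot_kernel z : in_c0R z -> (quot z = 0 <-> exists x, c0 x /\ peq (incl x) z).
Proof.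
destruct z as [x y]; unfold quot, in_c0R; simpl; intro Hx; split.
- intro Hy; exists x; repeat split; auto.
- intros [x' [_ [_ Hy]]]; auto.
Qed.

Definition zero_section (y : R) : (nat -> R) * R := (fun _ => 0, y).

Lemma zero_section_bdd_linear : bdd_linear_from_R zero_section.
Proof.
split; [|split].
- intro y; apply c0_zero.
- intros a b y y'; split; simpl; [intro n|]; ring.
- exists 1; intro y; pose proof (Rabs_pos y); split; simpl; [intro n; rewrite Rabs_R0|]; lra.
Qed.

Definition flip_at (n : nat) : nat -> bool := fun k => Nat.eqb k n.

Lemma flip_at_inG n : inG (flip_at n).
Proof. exists (S n); intros k Hk; apply Nat.eqb_neq; lia. Qed.

Lemma lam_fixed_coord n z : peq (lam (flip_at n) z) z -> fst z n = snd z / 2.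
Proof.
intros [Hfix _]; specialize (Hfix n); simpl in Hfix.
unfold flip_at in Hfix; rewrite Nat.eqb_refl in Hfix; simpl in Hfix; lra.
Qed.

Lemma no_G_splitting :
  ~ (exists s : R -> (nat -> R) * R, bdd_linear_from_R s /\ (forall y, quot (s y) = y) /\
       forall g, inG g -> forall y, peq (lam g (s y)) (s y)).
Proof.
intros [s [[Hc0 _] [Hq Hfix]]].
assert (Hhalf : forall n, fst (s 1) n = / 2).
{ intro n; rewrite (lam_fixed_coord n _ (Hfix _ (flip_at_inG n) 1)).
  unfold quot in Hq; rewrite Hq; field. }
pose proof (c0_const _ _ (Hc0 1) Hhalf); lra.
Qed.

Section OneDimensionalQuotient.

Variable Z : BanachSpace.
Variable q : Z -> R.
Hypothesis q_linear :
  forall a b z z', q (bs_add Z (bs_scal Z a z) (bs_scal Z b z')) = a * q z + b * q z'.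

Lemma bs_scal0_add a z : bs_add Z (bs_scal Z a z) (bs_scal Z 0 z) = bs_scal Z a z.
Proof. rewrite <- bs_scalDl, Rplus_0_r; reflexivity. Qed.

Lemma linear_scal a z : q (bs_scal Z a z) = a * q z.
Proof. rewrite <- (bs_scal0_add a z), q_linear; ring. Qed.

Lemma split_by_preimage z0 :
  q z0 = 1 ->
  exists s : R -> Z,
    (forall a b y y', s (a * y + b * y') = bs_add Z (bs_scal Z a (s y)) (bs_scal Z b (s y'))) /\
    (exists C, forall y, bs_norm Z (s y) <= C * Rabs y) /\
    (forall y, q (s y) = y).
Proof.
intro Hz0; exists (fun y => bs_scal Z y z0); repeat split.
- intros a b y y'; rewrite !bs_scalA, bs_scalDl; reflexivity.
- exists (bs_norm Z z0); intro y; rewrite bs_normZ; right; ring.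
- intro y; rewrite linear_scal, Hz0; ring.
Qed.

End OneDimensionalQuotient.

Lemma Ext_R_c0_trivial_holds : Ext_R_c0_trivial.
Proof.
intros Z j q _ _ Hq _ _ Hsurj _.
destruct (Hsurj 1) as [z0 Hz0].
exact (split_by_preimage Z q Hq z0 Hz0).
Qed.

Theorem mainTheorem18 :
  (forall g, inG g -> forall x, c0 x -> c0 (u_act g x)) /\
  (forall g, inG g -> forall z, in_c0R z -> in_c0R (lam g z)) /\
  (forall g, inG g -> linear_c0R (lam g)) /\
  (exists C, forall g, inG g -> bounded_c0R (lam g) C) /\
  (forall z, peq (lam Gunit z) z) /\
  (forall g h, inG g -> inG h -> forall z,
      peq (lam (Gmul g h) z) (lam g (lam h z))) /\
  (forall g, inG g -> forall x, peq (lam g (incl x)) (incl (u_act g x))) /\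
  (forall g, inG g -> forall z, quot (lam g z) = quot z) /\
  (forall x x', incl x = incl x' -> x = x') /\
  (forall y, exists z, in_c0R z /\ quot z = y) /\
  (forall z, in_c0R z -> (quot z = 0 <-> exists x, c0 x /\ peq (incl x) z)) /\
  (exists s : R -> (nat -> R) * R, bdd_linear_from_R s /\ forall y, quot (s y) = y) /\
  ~ (exists s : R -> (nat -> R) * R, bdd_linear_from_R s /\ (forall y, quot (s y) = y) /\
       forall g, inG g -> forall y, peq (lam g (s y)) (s y)) /\
  Ext_R_c0_trivial.
Proof.
repeat match goal with |- _ /\ _ => split end.
- intros g _; apply u_act_c0.
- apply lam_c0R.
- intros g _; apply lam_linear.
- exists 2; intros g _; apply lam_bounded.
- apply lam_unit.
- intros g h _ _; apply lam_mul.
- intros g _; apply lam_incl.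
- intros g _; apply quot_lam.
- intros x x' H; exact (f_equal fst H).
- intro y; exists (zero_section y); split; [apply c0_zero|reflexivity].
- apply quot_kernel.
- exists zero_section; split; [exact zero_section_bdd_linear|reflexivity].
- exact no_G_splitting.
- exact Ext_R_c0_trivial_holds.
Qed.
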